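(* Let $V$ be a vertex operator algebra, $W_1,W_2,W_3$ weak $V$-modules and ${\mathcal Y}$ a quasi-intertwining operator of type $\binom{W_3}{W_1\,W_2}$. Then ${\mathcal Y}(w_{(1)},x)\in\mathcal H(W_2,W_3)$ for every $w_{(1)}\in W_1$, and the linear map $\psi_x:W_1\to\mathcal H(W_2,W_3)$, $\psi_x(w_{(1)})={\mathcal Y}(w_{(1)},x)$, is a $g(V)_{\ge0}$-homomorphism: $\psi_x(v_nw_{(1)})=v_n\psi_x(w_{(1)})$ for all $v\in V$, $n\ge0$, $w_{(1)}\in W_1$, where $v_n$ acts on $\mathcal H(W_2,W_3)$ via $Y_{\mathcal H}$.
   Context: A weak $V$-module is a module for $V$ regarded as a vertex algebra; $L(-1)=\omega_0$. A quasi-intertwining operator of type $\binom{W_3}{W_1\,W_2}$ is a linear map $W_1\otimes W_2\to W_3\{x\}$, $w_{(1)}\otimes w_{(2)}\mapsto{\mathcal Y}(w_{(1)},x)w_{(2)}=\sum_{n\in\mathbb C}(w_{(1)})_nw_{(2)}x^{-n-1}$, with $(w_{(1)})_nw_{(2)}=0$ for $\mathrm{Re}\,n\gg0$, the commutator formula $Y_3(v,x_1){\mathcal Y}(w_{(1)},x_2)w_{(2)}-{\mathcal Y}(w_{(1)},x_2)Y_2(v,x_1)w_{(2)}=\mathrm{Res}_{x_0}x_2^{-1}\delta(\frac{x_1-x_0}{x_2}){\mathcal Y}(Y_1(v,x_0)w_{(1)},x_2)w_{(2)}$, and $\frac{d}{dx}{\mathcal Y}(w_{(1)},x)={\mathcal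 Y}(L(-1)w_{(1)},x)$. $\mathcal H(W_2,W_3)$ is the space of $\phi(x)\in(\mathrm{Hom}(W_2,W_3))\{x\}$ such that: for each $w_{(2)}$, writing $\phi(x)w_{(2)}=\sum_{n\in\mathbb C}w^{(n)}x^{-n-1}$, $w^{(n)}=0$ for $\mathrm{Re}\,n\gg0$; $[L(-1),\phi(x)]=\frac{d}{dx}\phi(x)$; and for each $v\in V$ there is $k\ge0$ with $(x_1-x_2)^k(Y_3(v,x_1)\phi(x_2)-\phi(x_2)Y_2(v,x_1))=0$. The map $Y_{\mathcal H}(v,x_0)\phi(x)=\mathrm{Res}_{x_1}\big(x_0^{-1}\delta(\frac{x_1-x}{x_0})Y_3(v,x_1)\phi(x)-x_0^{-1}\delta(\frac{x-x_1}{-x_0})\phi(x)Y_2(v,x_1)\big)=\sum_nv_n\phi(x)x_0^{-n-1}$ makes $\mathcal H(W_2,W_3)$ a weak $V$-module; for $n\ge0$, $v_n\phi(x)=\mathrm{Res}_{x_1}(x_1-x)^n[Y_3(v,x_1)\phi(x)-\phi(x)Y_2(v,x_1)]$. *)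

From HB Require Import structures.
From mathcomp Require Import all_boot all_order all_algebra.
From mathcomp Require Import complex.
From mathcomp Require Import Rstruct.
Set Implicit Arguments. Unset Strict Implicit. Unset Printing Implicit Defensive.
Import Order.TTheory GRing.Theory Num.Theory.
Local Open Scope ring_scope.

Definition C : fieldType := (Rdefinitions.R)[i].

(* Conventions.  All formal series are represented by their coefficients:    *)
(*  - a vertex operator Y(v,x) = sum_{n in Z} v_n x^{-n-1} on a space W is    *)
(*    given by  Y : V -> int -> W -> W,  Y v n w = v_n w ;                    *)
(*  - a series phi(x) = sum_{n in C} phi_n x^{-n-1} in Hom(W2,W3){x} is given *)
(*    by  phi : C -> W2 -> W3,  phi n = phi_n.                                *)
(* Formal-calculus identities (Jacobi identity, commutator formula,          *)
(* derivative property, locality, residue formula for Y_H) are written out   *)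
(* coefficientwise.                                                          *)

Definition binz (m : int) (i : nat) : C :=
  (\prod_(j < i) (m%:~R - j%:R)) / (i`!)%:R.

(* a sum over i >= 0 whose terms vanish for large i: "sum_{i>=0} f i = sum_{i>=0} g i" *)
Definition fsum_eq (W : zmodType) (f g : nat -> W) : Prop :=
  exists N : nat, forall M : nat, (N <= M)%N ->
    \sum_(i < M) f i = \sum_(i < M) g i.

(* "a = sum_{i>=0} f i" for finitely supported f *)
Definition fsum_is (W : zmodType) (a : W) (f : nat -> W) : Prop :=
  exists N : nat, forall M : nat, (N <= M)%N -> a = \sum_(i < M) f i.

Section VOA.
Variable V : lmodType C.

Definition vop_bilinear (W : lmodType C) (Y : V -> int -> W -> W) : Prop :=
  (forall (a : C) (u v : V) n w, Y (a *: u + v) n w = a *: Y u n w + Y v n w) /\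
  (forall (a : C) v n (w w' : W), Y v n (a *: w + w') = a *: Y v n w + Y v n w').

Definition vop_truncation (W : lmodType C) (Y : V -> int -> W -> W) : Prop :=
  forall v w, exists N : int, forall n : int, N <= n -> Y v n w = 0.

Definition vop_vacuum (W : lmodType C) (Y : V -> int -> W -> W) (one : V) : Prop :=
  forall n w, Y one n w = if n == -1 then w else 0.

(* Jacobi identity for (V, Y) acting on W via YW, in its equivalent
   component (Borcherds) form: for u, v in V, w in W, p q r in Z,
   sum_{i>=0} binom(p,i) (u_{r+i} v)_{p+q-i} w
   = sum_{i>=0} (-1)^i binom(r,i) (u_{p+r-i} v_{q+i} w - (-1)^r v_{q+r-i} u_{p+i} w). *)
Definition jacobi_identity (Y : V -> int -> V -> V)
  (W : lmodType C) (YW : V -> int -> W -> W) : Prop :=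
  forall (u v : V) (w : W) (p q r : int),
    fsum_eq
      (fun i : nat => binz p i *: YW (Y u (r + i%:Z) v) (p + q - i%:Z) w)
      (fun i : nat => ((-1) ^+ i * binz r i) *:
          (YW u (p + r - i%:Z) (YW v (q + i%:Z) w)
           - ((-1) ^ r) *: YW v (q + r - i%:Z) (YW u (p + i%:Z) w))).

Definition is_VOA (Y : V -> int -> V -> V) (one omega : V) (c : C) : Prop :=
  let L := fun m : int => Y omega (m + 1) in
  [/\ vop_bilinear Y, vop_truncation Y, vop_vacuum Y one,
      ((forall v (n : int), 0 <= n -> Y v n one = 0) /\ (forall v, Y v (-1) one = v)) &
      jacobi_identity Y Y] /\
  [/\
      (forall (m n : int) v,
         L m (L n v) - L n (L m v) =
         (m - n)%:~R *: L (m + n) v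
         + ((if m + n == 0 then (m ^+ 3 - m)%:~R / 12%:R else 0) * c) *: v),
      (* L(-1)-derivative property: Y(L(-1)v,x) = d/dx Y(v,x) *)
      (forall v (n : int) w, Y (L (-1) v) n w = (- n)%:~R *: Y v (n - 1) w) &
      (* grading: V = (+)_{n in Z} V_(n), V_(n) = {v | L(0)v = n v},
         dim V_(n) finite, V_(n) = 0 for n << 0 *)
      [/\ (forall v, exists s : seq (int * V),
             v = \sum_(p <- s) p.2 /\ forall p, p \in s -> L 0 p.2 = p.1%:~R *: p.2),
          (forall n : int, exists b : seq V, forall v, L 0 v = n%:~R *: v ->
             exists a : nat -> C, v = \sum_(i < size b) a i *: nth 0 b i) &
          (exists N : int, forall (n : int) v, n < N -> L 0 v = n%:~R *: v -> v = 0)]].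

(* weak V-module (module for V regarded as a vertex algebra) *)
Definition is_weak_module (Y : V -> int -> V -> V) (one : V)
  (W : lmodType C) (YW : V -> int -> W -> W) : Prop :=
  [/\ vop_bilinear YW, vop_truncation YW, vop_vacuum YW one & jacobi_identity Y YW].

(* Quasi-intertwining operator of type (W3 / W1 W2):
   Yq w1 n w2 = (w1)_n w2,  Y(w1,x)w2 = sum_{n in C} (w1)_n w2 x^{-n-1}. *)
Definition is_quasi_intertwining (omega : V)
  (W1 W2 W3 : lmodType C)
  (Y1 : V -> int -> W1 -> W1) (Y2 : V -> int -> W2 -> W2) (Y3 : V -> int -> W3 -> W3)
  (Yq : W1 -> C -> W2 -> W3) : Prop :=
  [/\
      (forall (a : C) (w1 w1' : W1) n w2, Yq (a *: w1 + w1') n w2 = a *: Yq w1 n w2 + Yq w1' n w2),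
      (forall (a : C) w1 n (w2 w2' : W2), Yq w1 n (a *: w2 + w2') = a *: Yq w1 n w2 + Yq w1 n w2'),
      (forall w1 w2, exists N : int, forall n : C,
          (N%:~R < Re (n : Rdefinitions.R[i]))%R -> Yq w1 n w2 = 0),
      (* commutator formula, coefficient of x1^{-m-1} x2^{-n-1}:
         v_m (w1)_n w2 - (w1)_n v_m w2 = sum_{i>=0} binom(m,i) (v_i w1)_{m+n-i} w2 *)
      (forall (v : V) (m : int) (w1 : W1) (n : C) (w2 : W2),
          fsum_is (Y3 v m (Yq w1 n w2) - Yq w1 n (Y2 v m w2))
                  (fun i : nat => binz m i *: Yq (Y1 v i%:Z w1) (m%:~R + n - i%:R) w2)) &
      (* d/dx Y(w1,x) = Y(L(-1)w1,x), with L(-1) = omega_0 *)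
      (forall w1 (n : C) w2, Yq (Y1 omega 0 w1) n w2 = (- n) *: Yq w1 (n - 1) w2)].

Definition in_H (omega : V) (W2 W3 : lmodType C)
  (Y2 : V -> int -> W2 -> W2) (Y3 : V -> int -> W3 -> W3)
  (phi : C -> W2 -> W3) : Prop :=
  [/\
      (forall (a : C) n (w2 w2' : W2), phi n (a *: w2 + w2') = a *: phi n w2 + phi n w2'),
      (forall w2, exists N : int, forall n : C,
          (N%:~R < Re (n : Rdefinitions.R[i]))%R -> phi n w2 = 0),
      (* [L(-1), phi(x)] = d/dx phi(x), L(-1) = omega_0 *)
      (forall (n : C) w2, Y3 omega 0 (phi n w2) - phi n (Y2 omega 0 w2) = (- n) *: phi (n - 1) w2) &
      (* locality: (x1-x2)^k (Y3(v,x1)phi(x2) - phi(x2)Y2(v,x1)) = 0;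
         coefficient of x1^{-m-1} x2^{-n-1} *)
      (forall v : V, exists k : nat, forall (m : int) (n : C) (w2 : W2),
          \sum_(j < k.+1) (((-1) ^+ j * 'C(k, j)%:R) : C) *:
             (Y3 v (m + k%:Z - j%:Z) (phi (n + j%:R) w2)
              - phi (n + j%:R) (Y2 v (m + k%:Z - j%:Z) w2)) = 0)].

(* v_n phi(x) for n >= 0, the action Y_H on H(W2,W3):
   v_n phi(x) = Res_{x1} (x1 - x)^n [Y3(v,x1) phi(x) - phi(x) Y2(v,x1)],
   written coefficientwise: the coefficient of x^{-k-1} is
   sum_{i=0}^n binom(n,i) (-1)^i (v_{n-i} phi_{k+i} - phi_{k+i} v_{n-i}). *)
Definition YH_nonneg (W2 W3 : lmodType C)
  (Y2 : V -> int -> W2 -> W2) (Y3 : V -> int -> W3 -> W3)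
  (v : V) (n : nat) (phi : C -> W2 -> W3) : C -> W2 -> W3 :=
  fun (k : C) (w2 : W2) =>
    \sum_(i < n.+1) (((-1) ^+ i * 'C(n, i)%:R) : C) *:
       (Y3 v (n%:Z - i%:Z) (phi (k + i%:R) w2) - phi (k + i%:R) (Y2 v (n%:Z - i%:Z) w2)).
End VOA.

(* The commutator formula writes [v_m, (w1)_n] as sum_l binom(m,l) (v_l w1)_{m+n-l}.
   The k-th backward difference in m, sum_j (-1)^j binom(k,j) f(m-j), sends
   binom(m,l) to 0 for l < k and binom(m,k) to 1.  Locality of Y(w1,x) with k
   the truncation order of w1 and the formula for v_n Y(w1,x) (a residue which
   is exactly an n-th difference of commutators) are both instances of this. *)
From HB Require Import structures.
From mathcomp Require Import all_boot all_order all_algebra.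
From mathcomp Require Import complex.
From mathcomp Require Import Rstruct ring zify.
Set Implicit Arguments. Unset Strict Implicit. Unset Printing Implicit Defensive.
Import Order.TTheory GRing.Theory Num.Theory.
Local Open Scope ring_scope.

Lemma binz0 (a : int) : binz a 0 = 1.
Proof. by rewrite /binz big_ord0 fact0 divr1. Qed.

Lemma binz_small (m : int) (l : nat) : 0 <= m -> m < l%:Z -> binz m l = 0.
Proof.
case: m => // m _ lt_ml.
by rewrite /binz (bigD1 (Ordinal (lt_ml : (m < l)%N))) //= subrr !mul0r.
Qed.

Lemma binzS (a : int) (i : nat) : binz (a + 1) i.+1 = binz a i.+1 + binz a i.
Proof.
have fact_neq0 (n : nat) : (n`!)%:R != 0 :> C by rewrite pnatr_eq0 -lt0n fact_gt0.
set P := \prod_(j < i) (a%:~R - j%:R : C).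
have prodSl : \prod_(j < i.+1) ((a + 1)%:~R - j%:R : C) = (a + 1)%:~R * P.
  rewrite big_ord_recl subr0; congr (_ * _); apply: eq_bigr => j _.
  by rewrite /bump /= rmorphD /= -natr1; ring.
have prodSr : \prod_(j < i.+1) (a%:~R - j%:R : C) = P * (a%:~R - i%:R).
  by rewrite big_ord_recr.
rewrite /binz -/P prodSl prodSr factS natrM rmorphD /= -natr1.
by field; rewrite fact_neq0 natr1 pnatr_eq0.
Qed.

Lemma intrC_shift (a : int) (j : nat) (x : C) :
  (a - j%:Z)%:~R + (x + j%:R) = a%:~R + x.
Proof. by rewrite rmorphB /= addrACA addNr addr0. Qed.

Definition bdiff (k : nat) (f : int -> C) (a : int) : C :=
  \sum_(j < k.+1) ((-1) ^+ j * 'C(k, j)%:R) * f (a - j%:Z).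

Lemma bdiffS (k : nat) (f : int -> C) (a : int) :
  bdiff k.+1 f a = bdiff k f a - bdiff k f (a - 1).
Proof.
rewrite /bdiff big_ord_recl /= subr0.
under eq_bigr => j _ do rewrite /bump /= binS natrD mulrDr mulrDl.
rewrite big_split /= big_ord_recr /= (bin_small (ltnSn k)) mulr0 mul0r addr0.
rewrite [X in _ = X - _]big_ord_recl subr0 addrA !bin0.
congr (_ + _); rewrite -(@sumrN C); apply: eq_bigr => j _.
by rewrite add1n exprS !mulN1r !mulNr -[j.+1]addn1 PoszD opprD addrA addrAC.
Qed.

Lemma bdiff_binz (k i : nat) (a : int) :
  (i <= k)%N -> bdiff k (binz^~ i) a = (i == k)%:R.
Proof.
elim: k i a => [|k IHk] i a.
  by rewrite leqn0 => /eqP ->; rewrite /bdiff big_ord1 expr0 bin0 !mul1r binz0.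
rewrite bdiffS; case: i => [|i] le_ik; first by rewrite !IHk // subrr.
rewrite eqSS -(IHk i (a - 1)) // /bdiff -sumrB; apply: eq_bigr => j _.
by rewrite -mulrBr addrAC -{1}(subrK 1 (a - j%:Z)) binzS [binz _ i.+1 + _]addrC addrK.
Qed.

Lemma bdiff_binz_combination (W : lmodType C) (k : nat) (a : int) (X : nat -> W) :
  \sum_(j < k.+1) ((-1) ^+ j * 'C(k, j)%:R) *:
     \sum_(l < k.+1) binz (a - j%:Z) l *: X l = X k.
Proof.
have coef_bdiff (l : nat) : (l <= k)%N ->
    \sum_(j < k.+1) ((-1) ^+ j * 'C(k, j)%:R) *: (binz (a - j%:Z) l *: X l)
    = (l == k)%:R *: X l.
  move=> le_lk; under eq_bigr do rewrite scalerA.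
  by rewrite -scaler_suml -(@bdiff_binz k l a le_lk).
under eq_bigr => j _ do rewrite scaler_sumr.
rewrite exchange_big (eq_bigr _ (fun l _ => coef_bdiff _ (leq_ord l))).
rewrite big_ord_recr /= eqxx scale1r big1 ?add0r // => l _.
by rewrite ltn_eqF // scale0r.
Qed.

Lemma fsum_is_trunc (W : zmodType) (a : W) (f : nat -> W) (L : nat) :
  fsum_is a f -> (forall l, (L <= l)%N -> f l = 0) -> a = \sum_(l < L) f l.
Proof.
move=> [N HN] f_vanish; rewrite (HN (maxn N L)) ?leq_maxl //.
rewrite -!(big_mkord xpredT) (@big_cat_nat _ _ _ L 0 (maxn N L)) ?leq_maxr //=.
rewrite [X in _ + X]big1_seq ?addr0 //.
by move=> l /andP[_]; rewrite mem_iota subnKC ?leq_maxr // => /andP[/f_vanish].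
Qed.

Section QuasiIntertwiningOperator.
Variables (V : lmodType C) (omega : V) (W1 W2 W3 : lmodType C).
Variables (Y1 : V -> int -> W1 -> W1) (Y2 : V -> int -> W2 -> W2).
Variables (Y3 : V -> int -> W3 -> W3) (Yq : W1 -> C -> W2 -> W3).
Hypothesis Yq_qio : is_quasi_intertwining omega Y1 Y2 Y3 Yq.

Lemma Yq0 (n : C) (w2 : W2) : Yq 0 n w2 = 0.
Proof.
case: Yq_qio => linYq _ _ _ _; have := linYq 1 0 0 n w2.
rewrite !scale1r addr0 => Yq0_double.
by apply: (addrI (Yq 0 n w2)); rewrite addr0 -Yq0_double.
Qed.

Lemma Yq_commutator_nonneg (v : V) (m : int) (w1 : W1) (n : C) (w2 : W2) (L : nat) :
  0 <= m -> m < L%:Z ->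
  Y3 v m (Yq w1 n w2) - Yq w1 n (Y2 v m w2) =
  \sum_(l < L) binz m l *: Yq (Y1 v l w1) (m%:~R + n - l%:R) w2.
Proof.
case: Yq_qio => _ _ _ com _ ge0m lt_mL.
apply: fsum_is_trunc (com v m w1 n w2) _ => l le_Ll.
by rewrite binz_small ?scale0r // (lt_le_trans lt_mL) ?lez_nat.
Qed.

Lemma Yq_commutator_trunc (v : V) (m : int) (w1 : W1) (n : C) (w2 : W2) (L : nat) :
  (forall l : nat, (L <= l)%N -> Y1 v l w1 = 0) ->
  Y3 v m (Yq w1 n w2) - Yq w1 n (Y2 v m w2) =
  \sum_(l < L) binz m l *: Yq (Y1 v l w1) (m%:~R + n - l%:R) w2.
Proof.
case: Yq_qio => _ _ _ com _ Y1_vanish.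
by apply: fsum_is_trunc (com v m w1 n w2) _ => l /Y1_vanish ->; rewrite Yq0 scaler0.
Qed.

Lemma Yq_bracket_L_1 (w1 : W1) (n : C) (w2 : W2) :
  Y3 omega 0 (Yq w1 n w2) - Yq w1 n (Y2 omega 0 w2) = (- n) *: Yq w1 (n - 1) w2.
Proof.
case: Yq_qio => _ _ _ _ derYq.
rewrite (@Yq_commutator_nonneg omega 0 w1 n w2 1) // big_ord1 binz0 scale1r.
by rewrite add0r subr0 derYq.
Qed.

Lemma Yq_in_H (w1 : W1) : vop_truncation Y1 -> in_H omega Y2 Y3 (Yq w1).
Proof.
case: Yq_qio => _ linYq truncYq _ _ truncY1; split => // [n w2 | v].
  exact: Yq_bracket_L_1.
have [N Y1_vanish] := truncY1 v w1; exists `|N|%N => m n w2.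
set k := `|N|%N.
have Y1k_vanish (l : nat) : (k <= l)%N -> Y1 v l w1 = 0.
  by move=> le_kl; apply: Y1_vanish; rewrite (le_trans (lez_abs N)) ?lez_nat.
(* the k-th difference of the commutators picks out the vanishing term v_k w1 *)
rewrite -[RHS](Yq0 ((m + k%:Z)%:~R + n - k%:R) w2) -(Y1k_vanish k) //.
rewrite -(@bdiff_binz_combination _ k (m + k%:Z)
  (fun l => Yq (Y1 v l w1) ((m + k%:Z)%:~R + n - l%:R) w2)).
apply: eq_bigr => j _; congr (_ *: _).
rewrite (@Yq_commutator_trunc v _ w1 _ w2 k.+1) => [|l /ltnW]; last exact: Y1k_vanish.
apply: eq_bigr => l _; congr (_ *: Yq _ _ _).
by rewrite intrC_shift.
Qed.

Lemma Yq_YH_nonneg (v : V) (n : nat) (w1 : W1) (k : C) (w2 : W2) :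
  Yq (Y1 v n%:Z w1) k w2 = YH_nonneg Y2 Y3 v n (Yq w1) k w2.
Proof.
rewrite -[k in LHS](addrK n%:R) [k + _]addrC.
rewrite -(@bdiff_binz_combination _ n n%:Z
  (fun l => Yq (Y1 v l w1) (n%:R + k - l%:R) w2)).
apply: eq_bigr => i _; congr (_ *: _).
rewrite (@Yq_commutator_nonneg v _ w1 _ w2 n.+1); last 2 first.
- by rewrite subr_ge0 lez_nat -ltnS.
- by lia.
apply: eq_bigr => l _; congr (_ *: Yq _ _ _).
by rewrite intrC_shift.
Qed.

End QuasiIntertwiningOperator.

Theorem mainTheorem13
  (V : lmodType C) (Y : V -> int -> V -> V) (one omega : V) (c : C)
  (W1 W2 W3 : lmodType C)
  (Y1 : V -> int -> W1 -> W1) (Y2 : V -> int -> W2 -> W2) (Y3 : V -> int -> W3 -> W3)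
  (Yq : W1 -> C -> W2 -> W3) :
  is_VOA Y one omega c ->
  is_weak_module Y one Y1 -> is_weak_module Y one Y2 -> is_weak_module Y one Y3 ->
  is_quasi_intertwining omega Y1 Y2 Y3 Yq ->
  (forall w1 : W1, in_H omega Y2 Y3 (Yq w1)) /\
  (forall (v : V) (n : nat) (w1 : W1) (k : C) (w2 : W2),
     Yq (Y1 v n%:Z w1) k w2 = YH_nonneg Y2 Y3 v n (Yq w1) k w2).
Proof.
move=> _ [_ truncY1 _ _] _ _ Yq_qio; split=> [w1 | v n w1 k w2].
- exact: Yq_in_H Yq_qio w1 truncY1.
- exact: Yq_YH_nonneg Yq_qio v n w1 k w2.
Qed.
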